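(* Let $\mathcal{R}$ be a (finite or infinite) set of positive integers and let $R(z)=\sum_{r\in\mathcal{R}} z^r$. Let $K_{\mathcal{R}}(t,x,z)=\sum_S t^{\mathrm{da}(S)}x^{m(S)}z^{|S|}$, where the sum runs over all compositions $S$ (including the empty one) all of whose parts belong to $\mathcal{R}$, $m(S)$ is the number of parts and $|S|$ the sum of the parts. Then, as formal power series, $$K_{\mathcal{R}}(t,x,z)=\frac{1+xR(z)}{1-x^2R(z^2)-tx^2\left(R(z)^2-R(z^2)\right)}.$$
   Context: A composition is a finite sequence $(a_1,\dots,a_m)$, $m\ge0$, of positive integers. For a finite sequence $S=(a_1,\dots,a_m)$, the degree of asymmetry is $\mathrm{da}(S)=|\{i: 1\le i\le m/2,\ a_i\neq a_{m+1-i}\}|$. *)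

(* Formal power series in three variables t, x, z with
   integer coefficients, represented by their coefficient functions:
   f a m n = coefficient of t^a x^m z^n. *)
From mathcomp Require Import all_boot all_order all_algebra.
Set Implicit Arguments. Unset Strict Implicit. Unset Printing Implicit Defensive.
Import Order.TTheory GRing.Theory Num.Theory.
Local Open Scope ring_scope.

Definition fps := nat -> nat -> nat -> int.

Definition fps_add (f g : fps) : fps := fun a m n => f a m n + g a m n.
Definition fps_sub (f g : fps) : fps := fun a m n => f a m n - g a m n.
Definition fps_mul (f g : fps) : fps := fun a m n =>
  \sum_(i < a.+1) \sum_(j < m.+1) \sum_(k < n.+1)
     f i j k * g (a - i)%N (m - j)%N (n - k)%N.

Definition fps_mono (i j k : nat) : fps := fun a m n =>
  ((a == i) && (m == j) && (n == k))%:R.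
Definition fps_one : fps := fps_mono 0 0 0.
Definition fps_t : fps := fps_mono 1 0 0.
Definition fps_x : fps := fps_mono 0 1 0.

Definition Rz (R : pred nat) : fps := fun a m n =>
  ((a == 0%N) && (m == 0%N) && R n)%:R.
Definition Rz2 (R : pred nat) : fps := fun a m n =>
  ((a == 0%N) && (m == 0%N) && ~~ odd n && R n./2)%:R.

(* degree of asymmetry: |{ i : 1 <= i <= m/2, a_i <> a_{m+1-i} }|,
   written 0-indexed: i < m/2 and s_i <> s_{m-1-i} *)
Definition da (s : seq nat) : nat :=
  count (fun i => nth 0%N s i != nth 0%N s (size s - 1 - i)%N) (iota 0 (size s)./2).

(* A composition with m parts and sum n has every part <= n, so it is the
   image (map val) of a unique m-tuple over 'I_n.+1. *)
Definition K_coef (R : pred nat) (a m n : nat) : nat :=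
  #|[pred s : m.-tuple 'I_n.+1 |
      all R (map val s) && (sumn (map val s) == n) && (da (map val s) == a)]|.

Definition K (R : pred nat) : fps := fun a m n => (K_coef R a m n)%:R.

From mathcomp Require Import all_boot all_order all_algebra.
From mathcomp Require Import ring zify.
From Stdlib Require Import FunctionalExtensionality.
Set Implicit Arguments. Unset Strict Implicit. Unset Printing Implicit Defensive.
Import Order.TTheory GRing.Theory Num.Theory.
Local Open Scope ring_scope.

(* Removing the first and the last part of a composition S with at least two
   parts leaves a composition S' with da(S) = da(S') + [first part <> last part].
   Equal end parts r contribute x^2 z^(2r), i.e. x^2 R(z^2) in total, and
   distinct end parts contribute t x^2 (R(z)^2 - R(z^2)).  Together with the
   compositions of at most one part this gives
     K = 1 + x R(z) + x^2 R(z^2) K + t x^2 (R(z)^2 - R(z^2)) K,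
   which is the claimed identity, checked coefficient by coefficient. *)

Lemma leq_subn_eq (a b c : nat) : (b <= a)%N && (a - b == c)%N = (a == c + b)%N.
Proof. by case: leqP => /= ?; [apply/eqP/eqP | apply/esym/eqP]; lia. Qed.

Lemma leq_sumn_mem (s : seq nat) x : x \in s -> (x <= sumn s)%N.
Proof.
elim: s => //= y s IHs; rewrite in_cons => /predU1P[-> | /IHs le_xs].
  exact: leq_addr.
exact: leq_trans le_xs (leq_addl _ _).
Qed.

Lemma sum_ord_pick (F : nat -> int) n c :
  \sum_(i < n.+1) ((i : nat) == c)%:R * F i = (c <= n)%N%:R * F c.
Proof.
case: (leqP c n) => [le_cn | lt_nc].
  rewrite (bigD1 (Ordinal (le_cn : (c < n.+1)%N))) //= eqxx mul1r big1 ?addr0 //.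
  by move=> i /eqP ne_ic; case: eqP => [eq_ic|]; [case: ne_ic; apply: val_inj | rewrite mul0r].
rewrite big1 ?mul0r // => i _; case: eqP => [eq_ic|]; last by rewrite mul0r.
by have := ltn_ord i; lia.
Qed.

Lemma sum_ord_pick_subn (F : nat -> int) n c :
  \sum_(i < n.+1) ((n - i)%N == c)%:R * F i = (c <= n)%N%:R * F (n - c)%N.
Proof.
case: (leqP c n) => [le_cn | lt_nc].
  have := sum_ord_pick F n (n - c)%N; rewrite leq_subr mul1r => <-.
  apply: eq_bigr => i _; congr (_%:R * _).
  by have lt_in := ltn_ord i; apply/eqP/eqP; lia.
rewrite big1 ?mul0r // => i _; case: eqP => [eq_ic|]; last by rewrite mul0r.
by have := ltn_ord i; lia.
Qed.

Definition zconv (g h : nat -> int) (n : nat) : int :=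
  \sum_(k < n.+1) g k * h (n - k)%N.

Definition zdelta (k n : nat) : int := (n == k)%:R.

Lemma zconv_delta0r (g : nat -> int) : zconv g (zdelta 0) = g.
Proof.
apply: functional_extensionality => n; rewrite /zconv /zdelta.
under eq_bigr => k _ do rewrite mulrC.
by rewrite sum_ord_pick_subn leq0n subn0 mul1r.
Qed.

Lemma zconv_delta0l (h : nat -> int) : zconv (zdelta 0) h = h.
Proof.
apply: functional_extensionality => n; rewrite /zconv /zdelta.
by rewrite (sum_ord_pick (fun k => h (n - k)%N)) leq0n subn0 mul1r.
Qed.

Lemma fps_ext (f g : fps) : (forall a m n, f a m n = g a m n) -> f = g.
Proof.
move=> eq_fg; do 3!apply: functional_extensionality => ?; exact: eq_fg.
Qed.

Lemma fps_mulBr (f g h : fps) :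
  fps_mul f (fps_sub g h) = fps_sub (fps_mul f g) (fps_mul f h).
Proof.
apply: fps_ext => a m n; rewrite /fps_mul /fps_sub -sumrB.
apply: eq_bigr => i _; rewrite -sumrB; apply: eq_bigr => j _.
by rewrite -sumrB; apply: eq_bigr => k _; rewrite mulrBr.
Qed.

Definition fps_txz (i j : nat) (h : nat -> int) : fps :=
  fun a m n => ((a == i) && (m == j))%:R * h n.

Lemma fps_monoE i j k : fps_mono i j k = fps_txz i j (zdelta k).
Proof. by apply: fps_ext => a m n; rewrite /fps_mono /fps_txz /zdelta -natrM mulnb. Qed.

Definition coefRz (R : pred nat) (n : nat) : int := (R n)%:R.

Lemma RzE (R : pred nat) : Rz R = fps_txz 0 0 (coefRz R).
Proof. by apply: fps_ext => a m n; rewrite /Rz /fps_txz /coefRz -natrM mulnb. Qed.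

Definition coefRz2 (R : pred nat) (n : nat) : int := (~~ odd n && R n./2)%:R.

Lemma Rz2E (R : pred nat) : Rz2 R = fps_txz 0 0 (coefRz2 R).
Proof. by apply: fps_ext => a m n; rewrite /Rz2 /fps_txz /coefRz2 -natrM mulnb !andbA. Qed.

Lemma fps_sub_txz i j (g h : nat -> int) :
  fps_sub (fps_txz i j g) (fps_txz i j h) = fps_txz i j (g \- h).
Proof. by apply: fps_ext => a m n; rewrite /fps_sub /fps_txz mulrBr. Qed.

Lemma fps_mul_txzE (f : fps) i j (h : nat -> int) a m n :
  fps_mul f (fps_txz i j h) a m n =
  ((i <= a)%N && (j <= m)%N)%:R * zconv (f (a - i)%N (m - j)%N) h n.
Proof.
rewrite /fps_mul /fps_txz.
transitivity (\sum_(i' < a.+1) ((a - i')%N == i)%:R * ((j <= m)%N%:R *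
    \sum_(k < n.+1) f i' (m - j)%N k * h (n - k)%N)).
  apply: eq_bigr => i' _.
  rewrite -(sum_ord_pick_subn (fun j' => \sum_(k < n.+1) f i' j' k * h (n - k)%N)).
  rewrite mulr_sumr; apply: eq_bigr => j' _; rewrite mulrA mulr_sumr; apply: eq_bigr => k _.
  by rewrite -mulnb natrM; ring.
rewrite (sum_ord_pick_subn (fun i' => (j <= m)%N%:R *
  \sum_(k < n.+1) f i' (m - j)%N k * h (n - k)%N)).
by rewrite -mulnb natrM mulrA.
Qed.

Lemma fps_mul_txz i j (g : nat -> int) i' j' (h : nat -> int) :
  fps_mul (fps_txz i j g) (fps_txz i' j' h) = fps_txz (i + i') (j + j') (zconv g h).
Proof.
apply: fps_ext => a m n; rewrite fps_mul_txzE /fps_txz /zconv /=.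
under eq_bigr => k _ do rewrite -mulrA.
rewrite -mulr_sumr mulrA -natrM.
by rewrite mulnb andbACA !leq_subn_eq.
Qed.

Definition pair_series (N : nat) (W : nat -> nat -> bool) (j : nat) : int :=
  \sum_(x < N.+1) \sum_(y < N.+1) (((x + y)%N == j) && W x y)%:R.

Lemma zconv_pair_series (F h : nat -> int) (W : nat -> nat -> bool) n :
  (forall j, (j <= n)%N -> h j = pair_series n W j) ->
  zconv F h n =
  \sum_(x < n.+1) \sum_(y < n.+1) ((x + y <= n)%N && W x y)%:R * F (n - (x + y))%N.
Proof.
move=> h_pairs; rewrite /zconv.
under eq_bigr => k _ do rewrite h_pairs ?leq_subr // /pair_series mulr_sumr.
rewrite exchange_big /=; apply: eq_bigr => x _.
under eq_bigr => k _ do rewrite mulr_sumr.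
rewrite exchange_big /=; apply: eq_bigr => y _.
under eq_bigr => k _ do rewrite mulrC -mulnb natrM -mulrA eq_sym.
rewrite (sum_ord_pick_subn (fun k => (W x y)%:R * F k)).
by rewrite mulrA -natrM mulnb.
Qed.

Lemma eqn_double_half x j : ((x + x)%N == j) = ~~ odd j && (x == j./2).
Proof.
rewrite addnn; case odd_j: (odd j) => /=.
  by apply: contraTF odd_j => /eqP <-; rewrite odd_double.
by rewrite -{1}(odd_double_half j) odd_j add0n (inj_eq double_inj).
Qed.

Lemma coefRz2_pair_series (R : pred nat) N j : (j <= N)%N ->
  coefRz2 R j = pair_series N (fun x y => [&& R x, R y & x == y]) j.
Proof.
move=> le_jN; rewrite /pair_series.
transitivity (\sum_(x < N.+1) ((x : nat) == j./2)%:R * (~~ odd j && R j./2)%:R : int).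
  rewrite (sum_ord_pick (fun _ => (~~ odd j && R j./2)%:R)).
  suff -> : (j./2 <= N)%N by rewrite mul1r.
  by apply: leq_trans le_jN; rewrite -{2}(odd_double_half j) -addnn; lia.
apply: eq_bigr => x _.
transitivity (\sum_(y < N.+1) ((y : nat) == x)%:R * (((x + x)%N == j) && R x)%:R : int).
  have le_xN : (x <= N)%N := ltn_ord x.
  rewrite (sum_ord_pick (fun _ => (((x + x)%N == j) && R x)%:R)) le_xN mul1r -natrM mulnb.
  by rewrite eqn_double_half; case: eqP => [-> | _] /=; rewrite ?andbT ?andbF.
apply: eq_bigr => y _; rewrite -natrM mulnb.
by case: eqP => [<- | /nesym/eqP/negbTE ->]; rewrite /= ?eqxx ?andbT ?andbF ?andbb.
Qed.

Lemma coefRz_sqr_pair_series (R : pred nat) N j : (j <= N)%N ->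
  zconv (coefRz R) (coefRz R) j = pair_series N (fun x y => R x && R y) j.
Proof.
move=> le_jN; rewrite /zconv /pair_series.
rewrite (big_ord_widen N.+1 (fun k => coefRz R k * coefRz R (j - k))) // big_mkcond /=.
apply: eq_bigr => x _.
transitivity (\sum_(y < N.+1)
    ((y : nat) == (j - x)%N)%:R * [&& (x <= j)%N, R x & R y]%:R : int).
  rewrite (sum_ord_pick (fun y => [&& (x <= j)%N, R x & R y]%:R)).
  rewrite (leq_trans (leq_subr x j)) //.
  by rewrite ltnS mul1r /coefRz; case: (x <= j)%N; rewrite //= -natrM mulnb.
apply: eq_bigr => y _; rewrite -natrM mulnb eq_sym addnC.
by rewrite andbCA andbA leq_subn_eq [(j == _)]eq_sym.
Qed.

Lemma coefRz_sqr_sub_pair_series (R : pred nat) N j : (j <= N)%N ->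
  (zconv (coefRz R) (coefRz R) \- coefRz2 R) j =
  pair_series N (fun x y => [&& R x, R y & x != y]) j.
Proof.
move=> le_jN; rewrite /= (coefRz_sqr_pair_series R le_jN) (coefRz2_pair_series R le_jN).
rewrite /pair_series -sumrB; apply: eq_bigr => x _; rewrite -sumrB; apply: eq_bigr => y _.
by case: (_ + _ == j); case: (R x); case: (R y); case: (x == y :> nat);
  rewrite /= ?subr0 ?subrr.
Qed.

Section TupleSums.
Variables (V : nmodType) (T : finType).

Lemma sum_tuple0 (F : seq T -> V) : \sum_(s : 0.-tuple T) F s = F [::].
Proof.
rewrite (eq_bigr (fun _ => F [::])) => [|s _]; last by rewrite tuple0.
by rewrite sumr_const card_tuple.
Qed.

Lemma sum_tuple_cons m (F : seq T -> V) :
  \sum_(s : m.+1.-tuple T) F s = \sum_(x : T) \sum_(s : m.-tuple T) F (x :: s).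
Proof.
rewrite pair_big /=.
pose cons_t (p : T * m.-tuple T) := [tuple of p.1 :: p.2].
pose uncons_t (s : m.+1.-tuple T) := (thead s, [tuple of behead s]).
have cons_tK : cancel cons_t uncons_t.
  by case=> x s; rewrite /uncons_t /=; congr pair; apply: val_inj.
have uncons_tK : cancel uncons_t cons_t by move=> s; rewrite [RHS]tuple_eta.
by rewrite (reindex cons_t) //; exists uncons_t => ? _.
Qed.

Lemma sum_tuple_rev m (F : seq T -> V) :
  \sum_(s : m.-tuple T) F s = \sum_(s : m.-tuple T) F (rev s).
Proof.
have rev_inj : injective (@rev_tuple m T).
  by move=> s1 s2 /(congr1 val) /= /(congr1 rev); rewrite !revK => /val_inj.
by rewrite (reindex_inj rev_inj).
Qed.

Lemma sum_tuple_ends m (F : seq T -> V) :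
  \sum_(s : m.+2.-tuple T) F s =
  \sum_(x : T) \sum_(y : T) \sum_(s : m.-tuple T) F (x :: rcons s y).
Proof.
rewrite sum_tuple_cons; apply: eq_bigr => x _.
rewrite (sum_tuple_rev _ (fun s => F (x :: s))).
rewrite (sum_tuple_cons _ (fun s => F (x :: rev s))); apply: eq_bigr => y _.
rewrite (sum_tuple_rev _ (fun s => F (x :: rev (y :: s)))).
by apply: eq_bigr => s _; rewrite rev_cons revK.
Qed.

End TupleSums.

Lemma da_ends (x y : nat) (s : seq nat) : da (x :: rcons s y) = ((x != y) + da s)%N.
Proof.
rewrite /da /= size_rcons /= nth_rcons ltnn eqxx; congr addn.
rewrite -[1%N]/(1 + 0)%N iotaDl count_map; apply: eq_in_count => i.
rewrite mem_iota add0n => /andP[_ lt_i_half] /=.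
have lt_is : (i < size s)%N.
  by apply: leq_trans lt_i_half _; rewrite leq_half_double -addnn; lia.
rewrite nth_rcons lt_is.
have -> : ((size s).+2 - 1 - (1 + i) = (size s - 1 - i).+1)%N by lia.
by rewrite /= nth_rcons ifT //; lia.
Qed.

Definition is_Rcomp (R : pred nat) (a n : nat) (s : seq nat) : bool :=
  all R s && (sumn s == n) && (da s == a).

Lemma is_Rcomp_ends (R : pred nat) a n (x y : nat) (s : seq nat) :
  is_Rcomp R a n (x :: rcons s y) =
  [&& R x, R y, (x + y <= n)%N, ((x != y) <= a)%N &
      is_Rcomp R (a - (x != y))%N (n - (x + y))%N s].
Proof.
rewrite /is_Rcomp /= all_rcons sumn_rcons da_ends.
have -> : (x + (sumn s + y) == n)%N = (x + y <= n)%N && (sumn s == n - (x + y))%N.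
  by case: leqP => /= ?; [apply/eqP/eqP | apply/eqP]; lia.
have -> : ((x != y) + da s == a)%N = ((x != y) <= a)%N && (da s == a - (x != y))%N.
  by case: leqP => /= ?; [apply/eqP/eqP | apply/eqP]; lia.
case: (R x); case: (R y); case: (all R s); rewrite /= ?andbF //= !andbA.
by congr (_ && _); rewrite andbAC.
Qed.

(* Counting over an alphabet 'I_N.+1 larger than the sum n lets compositions
   of different sums be compared once their end parts are stripped. *)
Definition Rcomp_card (R : pred nat) (a m n N : nat) : nat :=
  #|[pred s : m.-tuple 'I_N.+1 | is_Rcomp R a n (map val s)]|.

Lemma Rcomp_card_sum (R : pred nat) a m n N :
  (Rcomp_card R a m n N)%:R =
  \sum_(s : m.-tuple 'I_N.+1) (is_Rcomp R a n (map val s))%:R :> int.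
Proof.
rewrite /Rcomp_card -sum1_card natr_sum big_mkcond /=.
by apply: eq_bigr => s _; rewrite inE; case: is_Rcomp.
Qed.

Lemma Rcomp_card_widen (R : pred nat) a m n N :
  (n <= N)%N -> Rcomp_card R a m n N = K_coef R a m n.
Proof.
move=> le_nN; rewrite /Rcomp_card /K_coef.
pose widen_t (s : m.-tuple 'I_n.+1) := map_tuple (widen_ord (le_nN : (n < N.+1)%N)) s.
have val_widen_t s : map val (widen_t s) = map val s by rewrite -map_comp.
have widen_t_inj : injective widen_t.
  move=> s1 s2 eq_s; apply/val_inj/(inj_map val_inj).
  by rewrite -(val_widen_t s1) -(val_widen_t s2) eq_s.
rewrite -(card_imset _ widen_t_inj); apply: eq_card => s; rewrite inE /=.
apply/idP/imsetP => [comp_s | [s' comp_s' ->]]; last first.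
  by rewrite val_widen_t; move: comp_s'; rewrite inE.
pose s' := map_tuple (fun i : 'I_N.+1 => inord i : 'I_n.+1) s.
have val_s' : map val s' = map val s.
  rewrite -map_comp; apply/eq_in_map => i s_i /=; rewrite inordK // ltnS.
  by move: comp_s => /andP[/andP[_ /eqP <-] _]; apply: leq_sumn_mem; apply: map_f.
exists s'; first by rewrite inE val_s'.
by apply/val_inj/(inj_map val_inj); rewrite val_widen_t val_s'.
Qed.

Lemma K_strip_ends (R : pred nat) a m n :
  K R a m.+2 n = \sum_(x < n.+1) \sum_(y < n.+1)
    [&& R x, R y, (x + y <= n)%N & ((x != y :> nat) <= a)%N]%:R *
    K R (a - (x != y :> nat))%N m (n - (x + y))%N.
Proof.
rewrite /K -[K_coef _ _ _ _]/(Rcomp_card R a m.+2 n n) Rcomp_card_sum.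
rewrite (sum_tuple_ends _ (fun s => (is_Rcomp R a n (map val s))%:R)).
apply: eq_bigr => x _; apply: eq_bigr => y _.
rewrite -(Rcomp_card_widen _ _ _ (leq_subr (x + y) n)) Rcomp_card_sum mulr_sumr.
apply: eq_bigr => s _.
by rewrite /= map_rcons is_Rcomp_ends -natrM mulnb !andbA.
Qed.

Lemma K_no_parts (R : pred nat) a n : K R a 0 n = ((a == 0%N) && (n == 0%N))%:R.
Proof.
rewrite /K -[K_coef _ _ _ _]/(Rcomp_card R a 0 n n) Rcomp_card_sum.
rewrite (sum_tuple0 (fun s : seq 'I_n.+1 => (is_Rcomp R a n (map val s))%:R)).
by rewrite /is_Rcomp /= andbC ![_ == 0%N]eq_sym.
Qed.

Lemma K_one_part (R : pred nat) a n : K R a 1 n = ((a == 0%N) && R n)%:R.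
Proof.
rewrite /K -[K_coef _ _ _ _]/(Rcomp_card R a 1 n n) Rcomp_card_sum.
rewrite (sum_tuple_cons _ (fun s : seq 'I_n.+1 => (is_Rcomp R a n (map val s))%:R)).
under eq_bigr => x _ do
  rewrite (sum_tuple0 (fun s : seq 'I_n.+1 => (is_Rcomp R a n (map val (x :: s)))%:R)).
transitivity (\sum_(x < n.+1) ((x : nat) == n)%:R * ((a == 0%N) && R n)%:R : int).
  apply: eq_bigr => x _; rewrite /is_Rcomp /da /= addn0 andbT.
  by case: eqP => [-> | _]; rewrite /= ?mul1r ?mul0r; case: (R _); case: a.
by rewrite (sum_ord_pick (fun _ => ((a == 0%N) && R n)%:R)) leqnn mul1r.
Qed.

Lemma K_rec (R : pred nat) a m n :
  K R a m.+2 n = zconv (K R a m) (coefRz2 R) n +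
    (0 < a)%N%:R * zconv (K R a.-1 m) (zconv (coefRz R) (coefRz R) \- coefRz2 R) n.
Proof.
rewrite (zconv_pair_series _ (fun j le_jn => coefRz2_pair_series R le_jn)).
rewrite (zconv_pair_series _ (fun j le_jn => coefRz_sqr_sub_pair_series R le_jn)).
rewrite K_strip_ends mulr_sumr -big_split; apply: eq_bigr => x _.
rewrite mulr_sumr -big_split; apply: eq_bigr => y _.
case: (R x); case: (R y); case: (x + y <= n)%N; case: eqP => _; case: a => [|a];
  by rewrite /= ?subn0 ?subn1 ?mul0r ?mul1r ?addr0 ?add0r.
Qed.

Theorem proposition2p2 (R : pred nat) (hR : forall r, R r -> (0 < r)%N) :
  fps_mul (K R)
    (fps_sub (fps_sub fps_one (fps_mul (fps_mul fps_x fps_x) (Rz2 R)))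
       (fps_mul (fps_mul fps_t (fps_mul fps_x fps_x))
          (fps_sub (fps_mul (Rz R) (Rz R)) (Rz2 R))))
  = fps_add fps_one (fps_mul fps_x (Rz R)).
Proof.
rewrite /fps_one /fps_t /fps_x !fps_monoE RzE Rz2E !fps_mul_txz !addn0 !add0n.
rewrite fps_sub_txz fps_mul_txz !zconv_delta0l.
rewrite !fps_mulBr; apply: fps_ext => a m n.
rewrite /fps_sub /fps_add !fps_mul_txzE /fps_txz !subn0 zconv_delta0r /=.
rewrite mul1r !addn0 -[(1 + 1)%N]/2%N subn1.
case: m => [|[|m]]; rewrite /= ?subn2.
- rewrite K_no_parts ltn0 !andbF andbT !mul0r !subr0.
  by rewrite /zdelta -natrM mulnb.
- by rewrite K_one_part ltnn !andbF andbT !mul0r !subr0 add0r /coefRz -natrM mulnb.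
- rewrite /= K_rec !ltnS andbT !andbF !mul0r addr0 mul1r.
  by rewrite addrAC addrK subrr.
Qed.
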